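(* Let $K$ be a field of characteristic zero, $0\ne c\in K$, $\phi$ the $K$-algebra endomorphism of $K[x]$ with $\phi(x)=x+c$, and $\delta=\mathrm{id}-\phi$. Let $a\in K$, $I$ the ideal of $K[x]$ generated by $x^2-ax$, and $\beta=a/c$. For $n\ge0$ set $D_n(t)=\frac{B_{n+1}(t)-B_{n+1}}{(n+1)t}$. Then for all $n\ge0$, $D_n(t)\in\mathbb{Q}[t]$ and $x^n\equiv D_n(\beta)c^n \pmod{\delta(I)}$.
   Context: $\mathrm{id}$ is the identity map of $K[x]$. The Bernoulli polynomials are defined by $\frac{ue^{tu}}{e^u-1}=\sum_{n\ge0}B_n(t)\frac{u^n}{n!}$, and $B_n=B_n(0)$ are the Bernoulli numbers. Congruence modulo the $K$-subspace $\delta(I)$ means the difference lies in $\delta(I)$. *)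

From HB Require Import structures.
From mathcomp Require Import all_boot all_order all_algebra.
Set Implicit Arguments. Unset Strict Implicit. Unset Printing Implicit Defensive.
Import Order.TTheory GRing.Theory Num.Theory.
Local Open Scope ring_scope.

(* Comparing coefficients of u^(m+1)/(m+1)!
   in  u e^{tu} = (e^u - 1) * sum_n B_n(t) u^n/n!  gives
     sum_{j=0}^{m} C(m+1,j) B_j(t) = (m+1) t^m,
   i.e.  B_m(t) = t^m - (1/(m+1)) sum_{j<m} C(m+1,j) B_j(t).
   bernp_upto m = [:: B_0; ...; B_m]. *)
Fixpoint bernp_upto (m : nat) : seq {poly rat} :=
  match m with
  | 0 => [:: 1]
  | m'.+1 =>
      let s := bernp_upto m' in
      rcons s ('X^(m'.+1) -
               ((m'.+2)%:R)^-1 *: \sum_(j < m'.+1) ('C(m'.+2, j)%:R *: s`_j))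
  end.

Definition bernp (m : nat) : {poly rat} := nth 0 (bernp_upto m) m.

Definition bernn (m : nat) : rat := (bernp m).[0].

Definition Dpoly (n : nat) : {poly rat} :=
  (bernp n.+1 - (bernn n.+1)%:P) %/ ((n.+1)%:R *: 'X).

Definition phi (K : fieldType) (c : K) (p : {poly K}) : {poly K} :=
  p \Po ('X + c%:P).

Definition delta (K : fieldType) (c : K) (p : {poly K}) : {poly K} :=
  p - phi c p.

From HB Require Import structures.
From mathcomp Require Import all_boot all_order all_algebra.
From mathcomp Require Import ring.
Import Order.TTheory GRing.Theory Num.Theory.
Local Open Scope ring_scope.

(* The recursion defining the Bernoulli polynomials gives B_m(t+1) - B_m(t)
   = m t^(m-1); as B_{n+1}(t) - B_{n+1} vanishes at 0, H(t) := t D_n(t) is a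
   polynomial with H(t+1) - H(t) = t^n, and this identity transfers to K
   because Q embeds in K.  Rescaling t = x/c conjugates delta to the forward
   difference at step 1, so delta(c^n H(x/c)) = -x^n, while delta(x) = -c.
   Hence x^n - c^n D_n(beta) = delta(c^(n-1) x (D_n(beta) - D_n(x/c))), and
   the polynomial D_n(beta) - D_n(x/c) vanishes at x = a, so the argument of
   delta lies in I = (x^2 - a x). *)

Lemma size_bernp_upto m : size (bernp_upto m) = m.+1.
Proof. by elim: m => [|m IH] //=; rewrite size_rcons IH. Qed.

Lemma nth_bernp_upto m j : (j <= m)%N -> (bernp_upto m)`_j = bernp j.
Proof.
elim: m => [|m IH]; first by rewrite leqn0 => /eqP ->.
rewrite leq_eqVlt => /orP[/eqP -> //|lt_jm].
by rewrite /= nth_rcons size_bernp_upto lt_jm IH.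
Qed.

Lemma bernpS m : bernp m.+1 = 'X^(m.+1) -
  (m.+2)%:R^-1 *: \sum_(j < m.+1) ('C(m.+2, j)%:R *: bernp j).
Proof.
rewrite {1}/bernp /= nth_rcons size_bernp_upto ltnn eqxx.
congr (_ - _ *: _); apply: eq_bigr => j _.
by rewrite nth_bernp_upto // -ltnS.
Qed.

Lemma bernp_forward_diff m : bernp m \Po ('X + 1) - bernp m = 'X^(m.-1) *+ m.
Proof.
elim/ltn_ind: m => -[|m] IH; first by rewrite comp_polyC subrr.
rewrite bernpS comp_polyB comp_polyZ raddf_sum comp_Xn_poly /=.
have shift_sum : \sum_(j < m.+1) ('C(m.+2, j)%:R *: bernp j \Po ('X + 1))
   = \sum_(j < m.+1) ('C(m.+2, j)%:R *: bernp j)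
     + \sum_(j < m.+1) 'X^(j.-1) *+ ('C(m.+2, j) * j).
  rewrite -big_split /=; apply: eq_bigr => j _.
  rewrite comp_polyZ -[bernp j \Po _](subrK (bernp j)) IH // !scaler_nat.
  by rewrite mulrnDl addrC mulrnA mulrnAC.
have absorb_sum : \sum_(j < m.+1) 'X^(j.-1) *+ ('C(m.+2, j) * j)
   = (m.+2)%:R *: \sum_(i < m) 'X^i *+ 'C(m.+1, i) :> {poly rat}.
  rewrite big_ord_recl /= muln0 mulr0n add0r scaler_sumr; apply: eq_bigr => i _.
  rewrite scaler_nat -mulrnA /bump leq0n add1n; congr (_ *+ _).
  by rewrite mulnC (mulnC _ m.+2) (mul_bin_diag m.+2 i).
rewrite shift_sum absorb_sum scalerDr scalerA mulVf ?pnatr_eq0 // scale1r.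
rewrite exprD1n big_ord_recr big_ord_recr /= binSn binn mulr1n /=.
ring.
Qed.

Lemma dvdp_scaleX_sub_horner0 (F : fieldType) (k : F) (p : {poly F}) :
  k != 0 -> (k *: 'X) %| p - p.[0]%:P.
Proof.
move=> k_neq0; rewrite dvdpZl // -[X in X %| _]subr0 -root_factor_theorem.
by rewrite /root !hornerE subrr.
Qed.

Lemma dvdp_bernp_sub_bernn n : (n.+1)%:R *: 'X %| bernp n.+1 - (bernn n.+1)%:P.
Proof. by rewrite dvdp_scaleX_sub_horner0 ?pnatr_eq0. Qed.

Lemma Dpoly_forward_diff n : ('X * Dpoly n) \Po ('X + 1) - 'X * Dpoly n = 'X^n.
Proof.
have n1_neq0 : (n.+1)%:R != 0 :> rat by rewrite pnatr_eq0.
have XDpoly := divpK (dvdp_bernp_sub_bernn n); rewrite -/(Dpoly n) in XDpoly.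
apply: (scalerI n1_neq0).
rewrite scalerBr -comp_polyZ scalerAl mulrC XDpoly comp_polyB comp_polyC.
by rewrite opprB addrA subrK bernp_forward_diff scaler_nat.
Qed.

Section Delta.

Variables (K : fieldType) (c : K).

Lemma delta_is_linear : linear (delta c).
Proof. by move=> k p q; rewrite /delta /phi linearP /= scalerBr addrACA opprD. Qed.

HB.instance Definition _ :=
  GRing.isLinear.Build K {poly K} {poly K} _ (delta c) delta_is_linear.

Hypothesis c_neq0 : c != 0.

Local Notation S := (c^-1 *: 'X).

Lemma phi_scaleX : phi c S = S + 1.
Proof. by rewrite /phi linearZ /= comp_polyX scalerDr scale_polyC mulVf // polyC1. Qed.

Lemma delta_comp_scaleX p : delta c (p \Po S) = (p - (p \Po ('X + 1))) \Po S.
Proof.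
rewrite /delta /phi -(comp_polyA p) -/(phi c S) phi_scaleX comp_polyB -comp_polyA.
by rewrite comp_polyD comp_polyX -polyC1 comp_polyC.
Qed.

Lemma delta_scaleX : delta c S = -1.
Proof. by rewrite /delta phi_scaleX opprD addrA subrr sub0r. Qed.

Lemma scaleX_factor (a : K) :
  'X^2 - a *: 'X = c ^+ 2 *: (S * (S - (a / c)%:P)).
Proof.
have cS : c *: S = 'X by rewrite scalerA mulfV // scale1r.
have cT : c *: (S - (a / c)%:P) = 'X - a%:P.
  by rewrite scalerBr cS scale_polyC mulrC divfK.
by rewrite [c ^+ 2]expr2 -scalerA scalerAl scalerAr cS cT mulrBr -expr2 mulrC mul_polyC.
Qed.

Lemma Xn_sub_const_in_delta_ideal (a : K) n (D : {poly K}) :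
    ('X * D) \Po ('X + 1) - 'X * D = 'X^n ->
  exists q, 'X^n - (D.[a / c] * c ^+ n)%:P = delta c (q * ('X^2 - a *: 'X)).
Proof.
move=> D_forward; set b := D.[a / c].
have [E DE] : exists E, D - b%:P = E * ('X - (a / c)%:P).
  by apply/factor_theorem; rewrite /root !hornerE subrr.
have DS : D \Po S = b%:P + (E \Po S) * (S - (a / c)%:P).
  rewrite -[D](subrK b%:P) DE comp_polyD comp_polyC comp_polyM comp_polyB.
  by rewrite comp_polyX comp_polyC addrC.
have Xn_delta : 'X^n = delta c (- c ^+ n *: (('X * D) \Po S)).
  rewrite linearZ /= delta_comp_scaleX -opprB D_forward linearN /= comp_Xn_poly.
  by rewrite exprZn scalerN scaleNr opprK scalerA exprVn mulfV ?expf_neq0 ?scale1r.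
have const_delta : (b * c ^+ n)%:P = delta c (- (b * c ^+ n) *: S).
  by rewrite linearZ /= delta_scaleX scaleNr scalerN opprK alg_polyC.
exists (- (c ^+ n / c ^+ 2) *: (E \Po S)).
rewrite Xn_delta const_delta -linearB /=; congr (delta c _).
rewrite scaleX_factor -scalerAr -scalerAl [RHS]scalerA mulrN [c ^+ 2 * _]mulrC.
rewrite divfK ?expf_neq0 // comp_polyM comp_polyX DS -!mul_polyC !rmorphN !rmorphM /=.
ring.
Qed.

End Delta.

Lemma map_forward_diff {R S : comNzRingType} (f : {rmorphism R -> S}) n (D : {poly R}) :
    ('X * D) \Po ('X + 1) - 'X * D = 'X^n ->
  ('X * map_poly f D) \Po ('X + 1) - 'X * map_poly f D = 'X^n.
Proof.
move/(congr1 (map_poly f)).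
by rewrite rmorphB /= map_comp_poly !rmorphM rmorphD rmorph1 /= map_polyX map_polyXn.
Qed.

Section CharZeroRat.

Variable K : fieldType.
Hypothesis K_pchar0 : [pchar K] =i pred0.

Lemma pchar0_intr_eq0 (d : int) : (d%:~R == 0 :> K) = (d == 0).
Proof.
have natr_eq0 n : (n%:R == 0 :> K) = (n == 0)%N by exact: (pcharf0P K).1.
by case: d => n; rewrite ?NegzE ?rmorphN ?oppr_eq0 /= natr_eq0.
Qed.

Lemma ratr_frac (m d : int) : d != 0 -> ratr (m%:~R / d%:~R : rat) = m%:~R / d%:~R :> K.
Proof.
move=> d_neq0; set x := _ / _.
have num_den : numq x * d = m * denq x.
  apply: (@intr_inj rat); rewrite !rmorphM /=; apply/eqP.
  by rewrite -eqr_div ?intr_eq0 ?denq_neq0 // divq_num_den.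
apply/eqP; rewrite /ratr eqr_div ?pchar0_intr_eq0 ?denq_neq0 //.
by rewrite -!rmorphM num_den.
Qed.

Lemma ratr_pchar0_is_zmod_morphism : zmod_morphism (@ratr K).
Proof.
move=> x y; rewrite -[x]divq_num_den -[y]divq_num_den.
have dx_neq0 := denq_neq0 x; have dy_neq0 := denq_neq0 y.
set nx := numq x; set dx := denq x; set ny := numq y; set dy := denq y.
have dxy_neq0 : dx * dy != 0 by rewrite mulf_neq0.
have -> : nx%:~R / dx%:~R - ny%:~R / dy%:~R
    = (nx * dy - ny * dx)%:~R / (dx * dy)%:~R :> rat.
  by rewrite rmorphB !rmorphM /=; field; rewrite !intr_eq0 dx_neq0 dy_neq0.
rewrite !ratr_frac // rmorphB !rmorphM /=.
by field; rewrite !pchar0_intr_eq0 dx_neq0 dy_neq0.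
Qed.

Lemma ratr_pchar0_is_monoid_morphism : monoid_morphism (@ratr K).
Proof.
split=> [|x y]; first exact: (ratr_nat K 1).
rewrite -[x]divq_num_den -[y]divq_num_den.
have dx_neq0 := denq_neq0 x; have dy_neq0 := denq_neq0 y.
set nx := numq x; set dx := denq x; set ny := numq y; set dy := denq y.
have dxy_neq0 : dx * dy != 0 by rewrite mulf_neq0.
have -> : nx%:~R / dx%:~R * (ny%:~R / dy%:~R) = (nx * ny)%:~R / (dx * dy)%:~R :> rat.
  by rewrite !rmorphM /=; field; rewrite !intr_eq0 dx_neq0 dy_neq0.
rewrite !ratr_frac // !rmorphM /=.
by field; rewrite !pchar0_intr_eq0 dx_neq0 dy_neq0.
Qed.

(* rat.v only equips [ratr] with a ring-morphism structure over a numFieldType. *)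
Definition ratr_pchar0 : {rmorphism rat -> K} :=
  HB.pack (@ratr K)
    (GRing.isZmodMorphism.Build _ _ _ ratr_pchar0_is_zmod_morphism)
    (GRing.isMonoidMorphism.Build _ _ _ ratr_pchar0_is_monoid_morphism).

Lemma map_ratr_Dpoly_forward_diff n :
  ('X * map_poly ratr (Dpoly n)) \Po ('X + 1) - 'X * map_poly ratr (Dpoly n)
    = 'X^n :> {poly K}.
Proof. exact: (@map_forward_diff rat K ratr_pchar0 n _ (Dpoly_forward_diff n)). Qed.

End CharZeroRat.

Theorem lemma4p5 (K : fieldType) (hK : [pchar K] =i pred0) (c a : K)
  (hc : c != 0) (n : nat) :
  (((n.+1)%:R *: 'X) %| (bernp n.+1 - (bernn n.+1)%:P)) /\
  exists q : {poly K},
    'X^n - ((map_poly ratr (Dpoly n)).[a / c] * c ^+ n)%:P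
      = delta c (q * ('X^2 - a *: 'X)).
Proof.
split; first exact: dvdp_bernp_sub_bernn.
exact/Xn_sub_const_in_delta_ideal/map_ratr_Dpoly_forward_diff.
Qed.
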